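(* Let $\xi\in\mathbb{S}^{N-1}$ and $\xi^\perp=I-\xi\otimes\xi$. (i) For $v\in\mathbb{R}^N$: $\xi\vee v\le0$ if and only if ($v=(\xi^\top v)\xi$ and $\xi^\top v\le0$), if and only if ($\xi^\perp v=0$ and $\xi^\top v\le0$), if and only if $v=-|v|\xi$. (ii) For $\mathbf{X}\in\mathbb{R}^N\otimes\mathbb{R}^{n\times n}_s$: $\xi\vee\mathbf{X}\le_\otimes0$ if and only if ($\mathbf{X}=\xi\otimes(\xi^\top\mathbf{X})$ and $\xi^\top\mathbf{X}\le0$), if and only if ($\xi^\perp\mathbf{X}=0$ and $\xi^\top\mathbf{X}\le0$), if and only if $\xi\vee\mathbf{X}\le0$. In particular, for every $\eta\in\mathbb{R}^N$ and $\mathbf{Y}\in\mathbb{R}^N\otimes\mathbb{R}^{n\times n}_s$, $\eta\vee\mathbf{Y}\le_\otimes0$ if and only if $\eta\vee\mathbf{Y}\le0$.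
   Context: Summation over repeated indices. For $a,b\in\mathbb{R}^N$, $a\vee b:=\frac12(a\otimes b+b\otimes a)\in\mathbb{R}^{N\times N}_s$, with inequalities of symmetric matrices in the sense of quadratic forms. $\mathbb{R}^N\otimes\mathbb{R}^{n\times n}_s$: arrays $\mathbf{X}=(\mathbf{X}_{\alpha ij})$ symmetric in $i,j$. $\xi^\top\mathbf{X}:=(\xi_\alpha\mathbf{X}_{\alpha ij})\in\mathbb{R}^{n\times n}_s$ (with $\le0$ meaning negative semidefinite), $\xi^\perp\mathbf{X}:=((\xi^\perp)_{\alpha\beta}\mathbf{X}_{\beta ij})$, $\xi\otimes A:=(\xi_\alpha A_{ij})$. $\xi\vee\mathbf{X}$ is the fourth-order tensor with components $\frac12(\xi_\alpha\mathbf{X}_{\beta ij}+\xi_\beta\mathbf{X}_{\alpha ij})$ indexed by $(\alpha i,\beta j)$. For a fourth-order tensor $\Xi$: $\Xi\le0$ means $\Xi_{\alpha i\beta j}P_{\alpha i}P_{\beta j}\le0$ for all $P\in\mathbb{R}^{N\times n}$; $\Xi\le_\otimes0$ means $\Xi_{\alpha i\beta j}\eta_\alpha w_i\eta_\beta w_j\le0$ for all $\eta\in\mathbb{R}^N,w\in\mathbb{R}^n$. *)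

(* R : rcfType (real closed field, so that the Euclidean norm
   |v| = Num.sqrt (sum v_a^2) exists). Vectors of R^N are column vectors 'cV[R]_N;
   elements X of R^N (x) R^{n x n}_s are families X : 'I_N -> 'M[R]_n of
   symmetric matrices (X a) i j = X_{a i j}. *)
From HB Require Import structures.
From mathcomp Require Import all_boot all_order all_algebra.
Set Implicit Arguments. Unset Strict Implicit. Unset Printing Implicit Defensive.
Import Order.TTheory GRing.Theory Num.Theory.
Local Open Scope ring_scope.

Section Defs.
Variable R : rcfType.

Definition vnorm N (v : 'cV[R]_N) : R := Num.sqrt (\sum_(a < N) v a 0 ^+ 2).

Definition in_sphere N (xi : 'cV[R]_N) : Prop := vnorm xi = 1.

Definition xiperp N (xi : 'cV[R]_N) : 'M[R]_N := 1%:M - xi *m xi^T.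

Definition xiT N (xi v : 'cV[R]_N) : R := (xi^T *m v) 0 0.

Definition vee N (a b : 'cV[R]_N) : 'M[R]_N := 2^-1 *: (a *m b^T + b *m a^T).

Definition nsd m (A : 'M[R]_m) : Prop := forall z : 'cV[R]_m, (z^T *m A *m z) 0 0 <= 0.

Definition sym_arr N n (X : 'I_N -> 'M[R]_n) : Prop := forall a, (X a)^T = X a.

Definition xiTX N n (xi : 'cV[R]_N) (X : 'I_N -> 'M[R]_n) : 'M[R]_n :=
  \sum_(a < N) xi a 0 *: X a.

Definition xiperpX N n (xi : 'cV[R]_N) (X : 'I_N -> 'M[R]_n) : 'I_N -> 'M[R]_n :=
  fun a => \sum_(b < N) xiperp xi a b *: X b.

Definition tens N n (xi : 'cV[R]_N) (A : 'M[R]_n) : 'I_N -> 'M[R]_n :=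
  fun a => xi a 0 *: A.

Definition veeT N n (xi : 'cV[R]_N) (X : 'I_N -> 'M[R]_n) :
    'I_N -> 'I_n -> 'I_N -> 'I_n -> R :=
  fun a i b j => 2^-1 * (xi a 0 * X b i j + xi b 0 * X a i j).

Definition tle0 N n (T : 'I_N -> 'I_n -> 'I_N -> 'I_n -> R) : Prop :=
  forall P : 'M[R]_(N, n),
    \sum_(a < N) \sum_(i < n) \sum_(b < N) \sum_(j < n)
      T a i b j * P a i * P b j <= 0.

Definition tle0_otimes N n (T : 'I_N -> 'I_n -> 'I_N -> 'I_n -> R) : Prop :=
  forall (eta : 'cV[R]_N) (w : 'cV[R]_n),
    \sum_(a < N) \sum_(i < n) \sum_(b < N) \sum_(j < n)
      T a i b j * eta a 0 * w i 0 * eta b 0 * w j 0 <= 0.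

End Defs.

From mathcomp Require Import all_boot all_order all_algebra.
From mathcomp Require Import ring lra.
From Stdlib Require Import FunctionalExtensionality.
Set Implicit Arguments. Unset Strict Implicit. Unset Printing Implicit Defensive.
Import Order.TTheory GRing.Theory Num.Theory.
Local Open Scope ring_scope.

(* If [x <> 0] and [(z.x)(z.u) <= 0] for every [z], then [|x|^2 u = (x.u) x]
   with [x.u <= 0]: otherwise probe with [z = x + t p], [p] the component of
   [u] orthogonal to [x].  Evaluated on a rank-one array
   [eta (x) w], the tensor [x \vee X] gives [(eta.x)(eta.u_w)] with
   [u_w = (w^T X_b w)_b], so by (i) [|x|^2 u_w = (w^T S w) x] for [S = x^T X]:
   each symmetric [|x|^2 X_b - x_b S] has a vanishing quadratic form, hence
   vanishes.  Conversely, if [|x|^2 X = x (x) S] then [|x|^2 (x \vee X)]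
   evaluated at [P] is the quadratic form of [S] at [P^T x], so rank-one
   testing suffices. *)

Section DotProduct.
Variables (R : rcfType) (N : nat).
Implicit Types (u v w x : 'cV[R]_N) (c : R).

Lemma xiTE u v : xiT u v = \sum_a u a 0 * v a 0.
Proof. by rewrite /xiT mxE; apply: eq_bigr => a _; rewrite mxE. Qed.

Lemma xiTC u v : xiT u v = xiT v u.
Proof. by rewrite /xiT -(trmxK (v^T *m u)) trmx_mul trmxK [in RHS]mxE. Qed.

Lemma xiTDr u v w : xiT u (v + w) = xiT u v + xiT u w.
Proof. by rewrite /xiT mulmxDr mxE. Qed.

Lemma xiTBr u v w : xiT u (v - w) = xiT u v - xiT u w.
Proof. by rewrite /xiT mulmxBr !mxE. Qed.

Lemma xiTZr u v c : xiT u (c *: v) = c * xiT u v.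
Proof. by rewrite /xiT -scalemxAr mxE. Qed.

Lemma xiTDl u v w : xiT (v + w) u = xiT v u + xiT w u.
Proof. by rewrite xiTC xiTDr !(xiTC u). Qed.

Lemma xiTBl u v w : xiT (v - w) u = xiT v u - xiT w u.
Proof. by rewrite xiTC xiTBr !(xiTC u). Qed.

Lemma xiTZl u v c : xiT (c *: v) u = c * xiT v u.
Proof. by rewrite xiTC xiTZr xiTC. Qed.

Lemma xiTxx_ge0 u : 0 <= xiT u u.
Proof. by rewrite xiTE sumr_ge0 // => a _; rewrite -expr2 sqr_ge0. Qed.

Lemma xiTxx_eq0 u : (xiT u u == 0) = (u == 0).
Proof.
apply/eqP/eqP => [|->]; last by rewrite xiTE big1 // => a _; rewrite mxE mul0r.
rewrite xiTE => /psumr_eq0P u0; apply/matrixP => a j; rewrite (ord1 j) mxE.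
by apply/eqP; rewrite -[_ == 0]orbb -mulf_eq0 u0 // => b _; rewrite -expr2 sqr_ge0.
Qed.

Lemma vnormE v : vnorm v = Num.sqrt (xiT v v).
Proof. by rewrite /vnorm xiTE; congr Num.sqrt; apply: eq_bigr => a _; rewrite expr2. Qed.

Lemma in_sphere_xiT x : in_sphere x -> xiT x x = 1.
Proof.
by rewrite /in_sphere vnormE => x1; rewrite -[xiT x x]sqr_sqrtr ?x1 ?expr1n ?xiTxx_ge0.
Qed.

Lemma xiperpE x v : xiperp x *m v = v - xiT x v *: x.
Proof. by rewrite /xiperp mulmxBl mul1mx -mulmxA [_^T *m v]mx11_scalar mul_mx_scalar. Qed.

End DotProduct.

Section QuadraticForm.
Variables (R : realFieldType) (n : nat).
Implicit Types (A B : 'M[R]_n) (y z : 'cV[R]_n) (c : R).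

Definition qform A z : R := (z^T *m A *m z) 0 0.

Lemma qformE A z : qform A z = \sum_i \sum_j A i j * z i 0 * z j 0.
Proof.
rewrite /qform mxE; under eq_bigr do rewrite mxE big_distrl.
rewrite exchange_big; apply: eq_bigr => i _; apply: eq_bigr => j _ /=.
by rewrite mxE [z i 0 * _]mulrC.
Qed.

Lemma qformD A B z : qform (A + B) z = qform A z + qform B z.
Proof. by rewrite /qform mulmxDr mulmxDl mxE. Qed.

Lemma qformB A B z : qform (A - B) z = qform A z - qform B z.
Proof. by rewrite /qform mulmxBr mulmxBl !mxE. Qed.

Lemma qformZ c A z : qform (c *: A) z = c * qform A z.
Proof. by rewrite /qform -scalemxAr -scalemxAl mxE. Qed.

Lemma qform_sum m (c : 'I_m -> R) (A : 'I_m -> 'M[R]_n) z :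
  qform (\sum_a c a *: A a) z = \sum_a c a * qform (A a) z.
Proof.
rewrite /qform mulmx_sumr mulmx_suml summxE.
by apply: eq_bigr => a _; rewrite -scalemxAr -scalemxAl mxE.
Qed.

Lemma sym_qform_eq0 A : A^T = A -> (forall z, qform A z = 0) -> A = 0.
Proof.
move=> symA qA0.
have bilin0 y z : (y^T *m A *m z) 0 0 = 0.
  have swap : (z^T *m A *m y) 0 0 = (y^T *m A *m z) 0 0.
    transitivity ((z^T *m A *m y)^T 0 0); first by rewrite [in RHS]mxE.
    by rewrite !trmx_mul trmxK symA mulmxA.
  have := qA0 (y + z); rewrite /qform [(y + z)^T]linearD /= mulmxDr !mulmxDl.
  rewrite ![((_ + _ : 'M_1) 0 0)]mxE swap.
  by rewrite [(y^T *m A *m y) 0 0]qA0 [(z^T *m A *m z) 0 0]qA0; lra.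
apply/matrixP => i j; have := bilin0 (delta_mx i 0) (delta_mx j 0).
by rewrite trmx_delta -rowE -colE !mxE.
Qed.

End QuadraticForm.

Section Vee.
Variables (R : rcfType) (N : nat).
Implicit Types (u v x z : 'cV[R]_N).

Lemma qform_outer z u v : qform (u *m v^T) z = xiT z u * xiT z v.
Proof. by rewrite /qform mulmxA -mulmxA mxE big_ord1 [xiT z v]xiTC. Qed.

Lemma qform_vee z u v : qform (vee u v) z = xiT z u * xiT z v.
Proof. by rewrite /vee qformZ qformD !qform_outer [xiT z v * _]mulrC; lra. Qed.

Lemma xiT_mul_le0_colinear x u : 0 < xiT x x ->
  (forall e, xiT e x * xiT e u <= 0) ->
  xiT x x *: u = xiT x u *: x /\ xiT x u <= 0.
Proof.
move=> s0 prod_le0; set s := xiT x x; set a := xiT x u.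
have a_le0 : a <= 0 by have := prod_le0 x; rewrite -/s -/a pmulr_rle0.
split=> //; set p := s *: u - a *: x.
have px : xiT p x = 0 by rewrite xiTBl !xiTZl -/s xiTC -/a mulrC subrr.
set b := xiT p u.
have pp : xiT p p = s * b by rewrite {2}/p xiTBr !xiTZr px mulr0 subr0.
have b_ge0 : 0 <= b by have := xiTxx_ge0 p; rewrite pp pmulr_rge0.
have b0 : b = 0.
  apply/eqP; rewrite eq_le b_ge0 andbT leNgt; apply/negP => b_gt0.
  (* [p] is orthogonal to [x], and [t = (1 - a) / b] makes [(z.x)(z.u) = s]. *)
  have := prod_le0 (x + ((1 - a) / b) *: p).
  rewrite !xiTDl !xiTZl px mulr0 addr0 -/s -/a -/b mulfVK ?gt_eqF //.
  by rewrite addrC subrK mulr1 leNgt s0.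
by apply/subr0_eq/eqP; rewrite -xiTxx_eq0 -/p pp b0 mulr0.
Qed.

Lemma nsd_vee_colinear x u : 0 < xiT x x ->
  nsd (vee x u) <-> xiT x x *: u = xiT x u *: x /\ xiT x u <= 0.
Proof.
move=> s0; split=> [nsdV | [su a_le0] z].
  by apply: xiT_mul_le0_colinear => // e; rewrite -qform_vee; apply: nsdV.
change (qform (vee x u) z <= 0); rewrite qform_vee -(pmulr_rle0 _ s0).
rewrite mulrCA -xiTZr su xiTZr mulrCA.
by rewrite mulr_le0_ge0 // -expr2 sqr_ge0.
Qed.

Lemma xiperp_eq0 x v : xiperp x *m v = 0 <-> v = xiT x v *: x.
Proof. by rewrite xiperpE; split=> [/subr0_eq | vE] //; rewrite {1}vE subrr. Qed.

Lemma colinear_le0_vnorm x v : in_sphere x ->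
  (v = xiT x v *: x /\ xiT x v <= 0) <-> v = - vnorm v *: x.
Proof.
move=> /in_sphere_xiT x1; split=> [[vE c_le0] | vE].
  set c := xiT x v in vE c_le0 *; rewrite {1}vE; congr (_ *: x).
  by rewrite vnormE vE xiTZl xiTZr x1 mulr1 -expr2 sqrtr_sqr ler0_norm ?opprK.
have c : xiT x v = - vnorm v by rewrite {1}vE xiTZr x1 mulr1.
by rewrite c; split=> //; rewrite oppr_le0 vnormE sqrtr_ge0.
Qed.

End Vee.

Section TensorVee.
Variables (R : rcfType) (N n : nat).
Implicit Types (x eta : 'cV[R]_N) (X : 'I_N -> 'M[R]_n) (w : 'cV[R]_n) (S : 'M[R]_n).

Definition qform_col X w : 'cV[R]_N := \col_b qform (X b) w.

Lemma xiT_qform_col x X w : xiT x (qform_col X w) = qform (xiTX x X) w.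
Proof. by rewrite /xiTX qform_sum xiTE; apply: eq_bigr => b _; rewrite mxE. Qed.

Lemma veeT_otimes_qform x X eta w :
  \sum_a \sum_i \sum_b \sum_j veeT x X a i b j * eta a 0 * w i 0 * eta b 0 * w j 0
  = qform (vee x (qform_col X w)) eta.
Proof.
rewrite qform_vee; set u := qform_col X w.
pose F a b := eta a 0 * x a 0 * (eta b 0 * u b 0).
transitivity (\sum_a \sum_b 2^-1 * (F a b + F b a)).
  apply: eq_bigr => a _; rewrite exchange_big; apply: eq_bigr => b _ /=.
  rewrite /F /u !mxE !qformE mulrDr !mulrA !big_distrr -big_split /=.
  apply: eq_bigr => i _; rewrite !big_distrr -big_split; apply: eq_bigr => j _ /=.
  rewrite /veeT; ring.
rewrite !xiTE big_distrlr -[RHS]/(\sum_a \sum_b F a b).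
under eq_bigr do rewrite -big_distrr big_split /=.
by rewrite -big_distrr big_split /= [E in _ * (_ + E)]exchange_big /=; lra.
Qed.

Lemma tle0_otimes_veeT_nsd x X :
  tle0_otimes (veeT x X) <-> forall w, nsd (vee x (qform_col X w)).
Proof.
split=> H w eta; last by rewrite veeT_otimes_qform; apply: H.
by change (qform (vee x (qform_col X w)) eta <= 0); rewrite -veeT_otimes_qform.
Qed.

Lemma tle0_otimes_veeT_colinear x X : 0 < xiT x x -> sym_arr X ->
  tle0_otimes (veeT x X) ->
  (forall b, xiT x x *: X b = x b 0 *: xiTX x X) /\ nsd (xiTX x X).
Proof.
move=> s0 symX /tle0_otimes_veeT_nsd nsdV.
have colw w := (nsd_vee_colinear _ s0).1 (nsdV w).
split=> [b | w]; last by have [_] := colw w; rewrite xiT_qform_col.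
apply/eqP; rewrite -subr_eq0; apply/eqP; apply: sym_qform_eq0 => [|w].
  rewrite linearB !linearZ /= symX /xiTX linear_sum /=.
  by congr (_ + _ *: - _); apply: eq_bigr => a _; rewrite linearZ /= symX.
have [/matrixP/(_ b 0)] := colw w; rewrite !mxE xiT_qform_col => colb _.
by rewrite qformB !qformZ colb mulrC subrr.
Qed.

Lemma colinear_tle0_veeT x X S : 0 < xiT x x ->
  (forall b, xiT x x *: X b = x b 0 *: S) -> nsd S -> tle0 (veeT x X).
Proof.
move=> s0 XE nsdS P; rewrite -(pmulr_rle0 _ s0).
have sX b i j : xiT x x * X b i j = x b 0 * S i j.
  by have /matrixP/(_ i j) := XE b; rewrite !mxE.
have termE a i b j : xiT x x * (veeT x X a i b j * P a i * P b j)
    = S i j * (P a i * x a 0) * (P b j * x b 0).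
  transitivity (2^-1 * (x a 0 * (xiT x x * X b i j) + x b 0 * (xiT x x * X a i j))
                * P a i * P b j); first by rewrite /veeT; ring.
  by rewrite !sX; lra.
rewrite (_ : _ * _ = qform S (P^T *m x)) ?nsdS //.
transitivity (\sum_a \sum_i \sum_b \sum_j S i j * (P a i * x a 0) * (P b j * x b 0)).
  rewrite big_distrr; apply: eq_bigr => a _; rewrite big_distrr; apply: eq_bigr => i _ /=.
  rewrite big_distrr; apply: eq_bigr => b _; rewrite big_distrr; apply: eq_bigr => j _ /=.
  exact: termE.
rewrite exchange_big qformE; apply: eq_bigr => i _ /=.
under eq_bigr do rewrite exchange_big /=.
rewrite exchange_big; apply: eq_bigr => j _ /=.
rewrite !mxE -mulrA big_distrlr /= mulr_sumr; apply: eq_bigr => a _.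
by rewrite mulr_sumr; apply: eq_bigr => b _; rewrite ![P^T _ _]mxE -mulrA.
Qed.

Lemma tle0_tle0_otimes (T : 'I_N -> 'I_n -> 'I_N -> 'I_n -> R) :
  tle0 T -> tle0_otimes T.
Proof.
move=> T_le0 eta w; have := T_le0 (eta *m w^T); congr (_ <= 0).
apply: eq_bigr => a _; apply: eq_bigr => i _.
apply: eq_bigr => b _; apply: eq_bigr => j _.
by rewrite !mxE !big_ord1 !mxE !mulrA.
Qed.

Lemma tle0_veeT_colinearE x X : 0 < xiT x x -> sym_arr X ->
  tle0 (veeT x X) <->
  (forall b, xiT x x *: X b = x b 0 *: xiTX x X) /\ nsd (xiTX x X).
Proof.
move=> s0 symX; split=> [/tle0_tle0_otimes | [XE nsdS]].
  exact: tle0_otimes_veeT_colinear.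
exact: colinear_tle0_veeT s0 XE nsdS.
Qed.

Lemma tle0_otimes_veeTE eta X : sym_arr X ->
  tle0_otimes (veeT eta X) <-> tle0 (veeT eta X).
Proof.
move=> symX; split=> [otimes_le0 | ]; last exact: tle0_tle0_otimes.
have [-> P | ] := eqVneq eta 0.
  rewrite big1 // => a _; rewrite big1 // => i _; rewrite big1 // => b _.
  by rewrite big1 // => j _; rewrite /veeT !mxE !mul0r addr0 mulr0 !mul0r.
rewrite -xiTxx_eq0 => s_neq0.
have s0 : 0 < xiT eta eta by rewrite lt_def s_neq0 xiTxx_ge0.
by apply/(tle0_veeT_colinearE s0 symX)/tle0_otimes_veeT_colinear.
Qed.

Lemma tensP x X S : X = tens x S <-> forall b, X b = x b 0 *: S.
Proof. by split=> [-> | XE] //; apply: functional_extensionality. Qed.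

Lemma xiperpXE x X a : xiperpX x X a = X a - x a 0 *: xiTX x X.
Proof.
rewrite /xiperpX /xiperp; under eq_bigr do rewrite !mxE big_ord1 !mxE scalerBl.
rewrite sumrB (bigD1 a) //= eqxx mulr1n scale1r big1 ?addr0 => [|b /negPf]; last first.
  by rewrite eq_sym => ->; rewrite mulr0n scale0r.
by rewrite /xiTX scaler_sumr; congr (_ - _); apply: eq_bigr => b _; rewrite scalerA.
Qed.

Lemma xiperpX_eq0 x X : xiperpX x X = (fun _ => 0) <-> X = tens x (xiTX x X).
Proof.
split=> [xpX0 | XE]; apply: functional_extensionality => a.
  by apply/subr0_eq; rewrite -xiperpXE xpX0.
by rewrite xiperpXE {1}XE subrr.
Qed.

End TensorVee.

Theorem proposition14 (R : rcfType) (N n : nat) (xi : 'cV[R]_N) :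
  in_sphere xi ->
  (* (i) *)
  (forall v : 'cV[R]_N,
     (nsd (vee xi v) <-> (v = xiT xi v *: xi /\ xiT xi v <= 0)) /\
     ((v = xiT xi v *: xi /\ xiT xi v <= 0) <->
        (xiperp xi *m v = 0 /\ xiT xi v <= 0)) /\
     ((xiperp xi *m v = 0 /\ xiT xi v <= 0) <-> v = - vnorm v *: xi)) /\
  (* (ii) *)
  (forall X : 'I_N -> 'M[R]_n, sym_arr X ->
     (tle0_otimes (veeT xi X) <->
        (X = tens xi (xiTX xi X) /\ nsd (xiTX xi X))) /\
     ((X = tens xi (xiTX xi X) /\ nsd (xiTX xi X)) <->
        (xiperpX xi X = (fun _ => 0) /\ nsd (xiTX xi X))) /\
     ((xiperpX xi X = (fun _ => 0) /\ nsd (xiTX xi X)) <->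
        tle0 (veeT xi X))) /\
  (* in particular *)
  (forall (eta : 'cV[R]_N) (Y : 'I_N -> 'M[R]_n), sym_arr Y ->
     (tle0_otimes (veeT eta Y) <-> tle0 (veeT eta Y))).
Proof.
move=> xi1; have s1 := in_sphere_xiT xi1; have s0 : 0 < xiT xi xi by rewrite s1.
split; [move=> v | split; last first].
- rewrite (nsd_vee_colinear _ s0) s1 scale1r.
  by rewrite xiperp_eq0; do 2!split=> //; apply: colinear_le0_vnorm.
- by move=> eta Y /tle0_otimes_veeTE.
move=> X symX.
have tensE : X = tens xi (xiTX xi X) <->
             forall b, xiT xi xi *: X b = xi b 0 *: xiTX xi X.
  rewrite tensP s1; split=> XE b; first by rewrite scale1r XE.
  by rewrite -[X b]scale1r XE.
rewrite (tle0_otimes_veeTE _ symX) (tle0_veeT_colinearE s0 symX) xiperpX_eq0 -tensE.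
by split; [|split].
Qed.
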